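(* Let $G$ be a group, $f:G\to G$ an endomorphism, and $x_0\in G$ such that $f^2(x)=x_0^{-1}f(x)x_0$ for all $x\in G$. Put $x_i=f^i(x_0)$ for $i>0$. If there exist $k\ge1$ and $i\ge0$ with $x_i^k\in\mathrm{im}(f^{i+1})$, then there exist $n\ge1$, an endomorphism $g:G\to G$ with $g\circ g=g$, and $c\in G$ such that $g(x)=c\,f^n(x)\,c^{-1}$ for all $x\in G$ (i.e. some power of $f$ is conjugate to an idempotent endomorphism). *)

From mathcomp Require Import all_boot.
Set Implicit Arguments. Unset Strict Implicit. Unset Printing Implicit Defensive.

Definition is_group (G : Type) (mul : G -> G -> G) (one : G) (inv : G -> G) : Prop :=
  [/\ (forall x y z, mul x (mul y z) = mul (mul x y) z),
      (forall x, mul one x = x),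
      (forall x, mul x one = x),
      (forall x, mul (inv x) x = one)
    & (forall x, mul x (inv x) = one)].

Definition is_endo (G : Type) (mul : G -> G -> G) (f : G -> G) : Prop :=
  forall x y, f (mul x y) = mul (f x) (f y).

Definition gpow (G : Type) (mul : G -> G -> G) (one : G) (x : G) (k : nat) : G :=
  iter k (mul x) one.

(* Since f^2 is f followed by conjugation by x0, f is injective on im f, and
   applying f once more shows that on im f^2 the map f is conjugation by f(x0).
   Injectivity turns (f^i x0)^k in im f^(i+1) into f(x0)^k = f^2 y; conjugating
   by y then gives im f^2 = im f^(k+2), hence im f = im f^2.  So f(x0) undoes
   the action of f on all of im f, which says exactly that
   x |-> x0 f(x) x0^-1 is idempotent. *)
From mathcomp Require Import all_boot.

Set Implicit Arguments.
Unset Strict Implicit.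
Unset Printing Implicit Defensive.

Section Group.

Variables (G : Type) (mul : G -> G -> G) (one : G) (inv : G -> G).
Hypothesis groupG : is_group mul one inv.

Local Notation "x ^+ k" := (gpow mul one x k).

Lemma mulgA x y z : mul x (mul y z) = mul (mul x y) z.
Proof. by case: groupG. Qed.

Lemma mul1g x : mul one x = x.
Proof. by case: groupG. Qed.

Lemma mulg1 x : mul x one = x.
Proof. by case: groupG. Qed.

Lemma mulVg x : mul (inv x) x = one.
Proof. by case: groupG. Qed.

Lemma mulgV x : mul x (inv x) = one.
Proof. by case: groupG. Qed.

Lemma mulgI a : injective (mul a).
Proof. by move=> b c /(congr1 (mul (inv a))); rewrite !mulgA mulVg !mul1g. Qed.

Lemma mulIg a : injective (mul^~ a).
Proof. by move=> b c /(congr1 (mul^~ (inv a))); rewrite -!mulgA mulgV !mulg1. Qed.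

Lemma invg_unique a b : mul a b = one -> a = inv b.
Proof. by move=> ab1; apply: (@mulIg b); rewrite ab1 mulVg. Qed.

Lemma gpowSr x k : x ^+ k.+1 = mul (x ^+ k) x.
Proof.
elim: k => [|k IHk]; first by rewrite /gpow /= mul1g mulg1.
by rewrite -[LHS]/(mul x (x ^+ k.+1)) [in LHS]IHk mulgA.
Qed.

Section Endomorphism.

Variable f : G -> G.
Hypothesis endo_f : is_endo mul f.

Lemma morph1 : f one = one.
Proof. by apply: (@mulgI (f one)); rewrite -endo_f !mulg1. Qed.

Lemma morphV x : f (inv x) = inv (f x).
Proof. by apply: invg_unique; rewrite -endo_f mulVg morph1. Qed.

Lemma morphX x k : f (x ^+ k) = (f x) ^+ k.
Proof. by elim: k => [|k IHk] /=; [exact: morph1 | rewrite endo_f IHk]. Qed.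

Lemma iter_morphX j x k : iter j f (x ^+ k) = (iter j f x) ^+ k.
Proof. by elim: j => [|j IHj] //=; rewrite IHj morphX. Qed.

Variable x0 : G.
Hypothesis f2_conj : forall x, f (f x) = mul (inv x0) (mul (f x) x0).

Lemma f_eq_of_f2_eq a b : f (f a) = f (f b) -> f a = f b.
Proof. by rewrite !f2_conj => /mulgI /mulIg. Qed.

Lemma f_eq_of_iter_eq j a b : iter j.+1 f a = iter j.+1 f b -> f a = f b.
Proof. by elim: j => [|j IHj] // eq_ab; apply/IHj/f_eq_of_f2_eq. Qed.

Lemma f3_conj u : f (f (f u)) = mul (inv (f x0)) (mul (f (f u)) (f x0)).
Proof. by rewrite [LHS](congr1 f (f2_conj u)) !endo_f morphV. Qed.

Lemma f3_commute u : mul (f x0) (f (f (f u))) = mul (f (f u)) (f x0).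
Proof. by rewrite f3_conj mulgA mulgV mul1g. Qed.

Lemma iter_f2_commute m u :
  mul ((f x0) ^+ m) (iter m f (f (f u))) = mul (f (f u)) ((f x0) ^+ m).
Proof.
have iterf2 v n : iter n f (f (f v)) = f (f (iter n f v)) by rewrite -!iterSr.
elim: m => [|m IHm]; first by rewrite /= mul1g mulg1.
by rewrite iterS iterf2 !gpowSr -mulgA f3_commute mulgA -iterf2 IHm mulgA.
Qed.

Lemma gpow_fx0_in_image_f2 i k y :
  iter i.+1 f y = (iter i f x0) ^+ k -> f (f y) = (f x0) ^+ k.
Proof.
move=> fy; rewrite -morphX; apply: (@f_eq_of_iter_eq i).
by rewrite -iterSr iterS fy morphX iter_morphX.
Qed.

Lemma image_f2_sub_f3 k y : 1 <= k -> f (f y) = (f x0) ^+ k ->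
  forall x, exists v, f (f x) = f (f (f v)).
Proof.
case: k => // k _ f2y x; set w := mul y (mul x (inv y)).
exists (iter k f w); apply: (@mulgI ((f x0) ^+ k.+1)).
have -> : f (f (f (iter k f w))) = iter k.+1 f (f (f w)) by rewrite -!iterSr.
(* f^(k+1) undoes the conjugation by f^2 y = f(x0)^(k+1) that turns f^2 x into f^2 w *)
rewrite iter_f2_commute /w !endo_f !morphV f2y.
by rewrite -!mulgA mulVg mulg1.
Qed.

Lemma image_f_sub_f2 :
  (forall x, exists v, f (f x) = f (f (f v))) -> forall x, exists v, f x = f (f v).
Proof.
move=> sub23 x; have [v f2x] := sub23 x; exists v.
by move: f2x; rewrite f2_conj (f2_conj (f v)) => /mulgI /mulIg.
Qed.

Definition conj_f x := mul x0 (mul (f x) (inv x0)).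

Lemma conj_f_endo : is_endo mul conj_f.
Proof.
move=> a b; rewrite /conj_f endo_f !mulgA.
by rewrite -[mul (mul (mul x0 (f a)) (inv x0)) x0]mulgA mulVg mulg1.
Qed.

Lemma conj_f_idem :
  (forall x, exists v, f x = f (f v)) -> forall x, conj_f (conj_f x) = conj_f x.
Proof.
move=> sub12 x; rewrite /conj_f !endo_f morphV.
have [v ->] := sub12 x; congr (mul x0 (mul _ (inv x0))).
by rewrite mulgA f3_commute -mulgA mulgV mulg1.
Qed.

End Endomorphism.

End Group.

Theorem corollary3p6 (G : Type) (mul : G -> G -> G) (one : G) (inv : G -> G)
  (f : G -> G) (x0 : G) :
  is_group mul one inv ->
  is_endo mul f ->
  (forall x, f (f x) = mul (inv x0) (mul (f x) x0)) ->
  (exists (k i : nat), 1 <= k /\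
     exists y, iter i.+1 f y = gpow mul one (iter i f x0) k) ->
  exists n : nat, 1 <= n /\
    exists g : G -> G, is_endo mul g /\ (forall x, g (g x) = g x) /\
      exists c : G, forall x, g x = mul c (mul (iter n f x) (inv c)).
Proof.
move=> groupG endo_f f2_conj [k [i [k_gt0 [y fy]]]].
have f2y := gpow_fx0_in_image_f2 groupG endo_f f2_conj fy.
have sub23 := image_f2_sub_f3 groupG endo_f f2_conj k_gt0 f2y.
have sub12 := image_f_sub_f2 groupG f2_conj sub23.
exists 1; split => //; exists (conj_f mul inv f x0).
split; first exact (conj_f_endo groupG endo_f x0).
split; first exact (conj_f_idem groupG endo_f f2_conj sub12).
by exists x0.
Qed.
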